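(* Let $R$ be a commutative ring with unit, let $Q$ be a labelled quiver with labels $X$ and let $F\subseteq R\langle X\rangle_Q$. If $G\subseteq R\langle X\rangle_Q$ is a set of $Q$-consequences of $F$, then any $Q$-consequence of $G$ is also a $Q$-consequence of $F$.
   Context: $R\langle X\rangle$ is the free algebra of noncommutative polynomials over $R$ in indeterminates $X$, with monomials the words in $\langle X\rangle$ (including the empty word $1$); $\operatorname{supp}(f)$ is the set of monomials with nonzero coefficient. A labelled quiver $Q=(V,E,X,s,t,l)$ has vertices $V$, edges $E$, source/target maps $s,t:E\to V$ and labelling $l:E\to X$. A nonempty path $p=e_n\cdots e_1$ (with $s(e_{i+1})=t(e_i)$) has label $l(e_n)\cdots l(e_1)$, source $s(e_1)$, target $t(e_n)$; each vertex $v$ has an empty path with label $1$ and source and target $v$. For a monomial $m$, $\sigma(m)=\{(s(p),t(p)) : p \text{ a path with } l(p)=m\}$; for a polynomial $f$, $\sigma(f)=\bigcap_{m\in\operatorname{supp}(f)}\sigma(m)$ (so $\sigma(0)=V\times V$). $f$ is compatible with $Q$ if $\sigma(f)\neq\emptyset$, and uniformly compatible if it is compatible and all $m\in\operatorname{supp}(f)$ have the same set $\sigma(m)$; $R\langle X\rangle_Q$ is the set of uniformly compatible polynomials. For $F\subseteq R\langle X\rangle_Q$, a polynomial $f$ is a $Q$-consequence of $F$ if $f$ is compatible with $Q$ and there are finitely many $a_i,b_i\in R\langle X\rangle_Q$ and $f_i\in F$ with $f=\sum_i a_if_ib_i$ and $\sigma(a_if_ib_i)\supseteq\sigma(f)$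 for every $i$ (the empty sum is allowed). *)

(* Noncommutative polynomials R<X> over a commutative ring R
   are represented as coefficient functions  seq X -> R  (a word is a seq,
   head = leftmost letter, [::] = empty word 1) with finite support. *)
From HB Require Import structures.
From mathcomp Require Import all_boot all_order all_algebra.
From Stdlib Require List.
Set Implicit Arguments. Unset Strict Implicit. Unset Printing Implicit Defensive.
Import GRing.Theory.
Local Open Scope ring_scope.

Section NC.
Variable R : comPzRingType.
Variable X : Type.

Definition ncpoly := seq X -> R.

Definition is_poly (f : ncpoly) : Prop :=
  exists L : seq (seq X), forall m, f m != 0 -> List.In m L.

Definition ncadd (f g : ncpoly) : ncpoly := fun m => f m + g m.

Definition ncmul (f g : ncpoly) : ncpoly :=
  fun m => \sum_(i < (size m).+1) f (take i m) * g (drop i m).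

Record quiver := Quiver {
  qV : Type; qE : Type;
  qs : qE -> qV; qt : qE -> qV; ql : qE -> X }.

(* reach Q m u w : there is a path p with label m, s(p) = u, t(p) = w.
   For m = x :: m', the last edge e_n has label x, target w, and the rest
   is a path with label m' from u to s(e_n). *)
Fixpoint reach (Q : quiver) (m : seq X) (u w : qV Q) : Prop :=
  match m with
  | [::] => u = w
  | x :: m' => exists e : qE Q, ql e = x /\ qt e = w /\ reach m' u (qs e)
  end.

Definition sigma_m (Q : quiver) (m : seq X) : qV Q * qV Q -> Prop :=
  fun p => reach m p.1 p.2.

Arguments sigma_m : clear implicits.

Definition sigma (Q : quiver) (f : ncpoly) : qV Q * qV Q -> Prop :=
  fun p => forall m, f m != 0 -> sigma_m Q m p.

Arguments sigma : clear implicits.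

Definition compatible (Q : quiver) (f : ncpoly) : Prop :=
  exists p, sigma Q f p.

Definition unif_compatible (Q : quiver) (f : ncpoly) : Prop :=
  compatible Q f /\
  forall m m', f m != 0 -> f m' != 0 -> forall p, sigma_m Q m p <-> sigma_m Q m' p.

Definition in_RXQ (Q : quiver) (f : ncpoly) : Prop :=
  is_poly f /\ unif_compatible Q f.

Definition Qconsequence (Q : quiver) (F : ncpoly -> Prop) (f : ncpoly) : Prop :=
  is_poly f /\ compatible Q f /\
  exists L : seq (ncpoly * ncpoly * ncpoly),
    (forall tr, List.In tr L ->
       in_RXQ Q tr.1.1 /\ F tr.1.2 /\ in_RXQ Q tr.2 /\
       (forall p, sigma Q f p -> sigma Q (ncmul (ncmul tr.1.1 tr.1.2) tr.2) p)) /\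
    (forall m, f m = \sum_(tr <- L) ncmul (ncmul tr.1.1 tr.1.2) tr.2 m).

End NC.

Arguments reach {X} Q m u w.
Arguments sigma_m {X} Q m p.
Arguments sigma {R X} Q f p.
Arguments compatible {R X} Q f.
Arguments unif_compatible {R X} Q f.
Arguments in_RXQ {R X} Q f.
Arguments Qconsequence {R X} Q F f.

(* Write h = sum_i a_i g_i b_i and g_i = sum_j c_ij f_ij d_ij; then
   h = sum_ij (a_i c_ij) f_ij (d_ij b_i), after discarding the summands that vanish
   (a vanishing product says nothing about the sigma of its factors).
   For uniformly compatible factors whose product is nonzero, sigma of the product is
   the relational composite of the sigmas of the factors, so sigma(g_i) included in
   sigma(c_ij f_ij d_ij) gives sigma(h) included in sigma(a_i g_i b_i), which is included
   in sigma((a_i c_ij) f_ij (d_ij b_i)); the same composite shows that a_i c_ij and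
   d_ij b_i are compatible. *)
From mathcomp Require Import all_boot all_order all_algebra.
From Stdlib Require Import Classical_Prop.
Import GRing.Theory.
Local Open Scope ring_scope.
Set Implicit Arguments. Unset Strict Implicit.

Section FreeAlgebra.
Variables (R : comPzRingType) (X : Type).
Implicit Types f g h : ncpoly R X.

Local Infix "**" := ncmul (at level 40, left associativity).

Definition nonzero f : Prop := exists m, f m != 0.

Lemma ncmul_ext f f' g g' m :
  (forall w, f w = f' w) -> (forall w, g w = g' w) -> (f ** g) m = (f' ** g') m.
Proof. by move=> Ef Eg; apply: eq_bigr => i _; rewrite Ef Eg. Qed.

Lemma ncmulA f g h m : (f ** g ** h) m = (f ** (g ** h)) m.
Proof.
rewrite /ncmul; set n := size m.
pose F j i := f (take j m) * g (take (i - j) (drop j m)) * h (drop i m).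
transitivity (\sum_(i < n.+1) \sum_(j < n.+1) (if (j <= i)%N then F j i else 0)).
  apply: eq_bigr => i _; have le_in : (i <= n)%N by rewrite -ltnS.
  rewrite big_distrl /= size_takel //.
  rewrite (big_ord_widen n.+1
    (fun j : nat => f (take j (take i m)) * g (drop j (take i m)) * h (drop i m))) //.
  rewrite big_mkcond; apply: eq_bigr => j _; rewrite ltnS; case: ifP => // le_ji.
  by rewrite /F take_takel // take_drop subnK.
rewrite exchange_big; apply: eq_bigr => j _; have le_jn : (j <= n)%N by rewrite -ltnS.
rewrite big_distrr /= size_drop -/n -big_mkcond /=.
transitivity (\sum_(j <= i < n.+1) F j i); first by rewrite big_geq_mkord.
rewrite -{1}(add0n j) big_addn big_mkord subSn //.
by apply: eq_bigr => k _; rewrite /F addnK drop_drop mulrA.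
Qed.

Lemma ncmul_regroup a c f d b m :
  (a ** c ** f ** (d ** b)) m = (a ** (c ** f ** d) ** b) m.
Proof.
rewrite -ncmulA; apply: ncmul_ext => // w.
transitivity ((a ** (c ** f) ** d) w); first by apply: ncmul_ext => // w'; apply: ncmulA.
exact: ncmulA.
Qed.

Lemma ncmul_suml (T : Type) (s : seq T) (F : T -> ncpoly R X) g m :
  ((fun w => \sum_(x <- s) F x w) ** g) m = \sum_(x <- s) (F x ** g) m.
Proof. by rewrite /ncmul; under eq_bigr do rewrite big_distrl; rewrite exchange_big. Qed.

Lemma ncmul_sumr (T : Type) (s : seq T) (F : T -> ncpoly R X) f m :
  (f ** (fun w => \sum_(x <- s) F x w)) m = \sum_(x <- s) (f ** F x) m.
Proof. by rewrite /ncmul; under eq_bigr do rewrite big_distrr; rewrite exchange_big. Qed.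

Lemma ncmul_neq0 f g m : (f ** g) m != 0 ->
  exists i, f (take i m) != 0 /\ g (drop i m) != 0.
Proof.
case: (boolP [exists i : 'I_(size m).+1, (f (take i m) != 0) && (g (drop i m) != 0)]).
  by case/existsP => i /andP[]; exists i.
move=> /existsPn none; rewrite /ncmul big1 ?eqxx // => i _.
by move: (none i); rewrite negb_and !negbK => /orP[] /eqP ->; rewrite ?mul0r ?mulr0.
Qed.

Lemma nonzero_mull f g : nonzero (f ** g) -> nonzero f.
Proof. by case=> m /ncmul_neq0 [i [nz _]]; exists (take i m). Qed.

Lemma is_poly_mul f g : is_poly f -> is_poly g -> is_poly (f ** g).
Proof.
move=> [Lf supp_f] [Lg supp_g].
exists (List.flat_map (fun u => List.map (fun v => u ++ v) Lg) Lf).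
move=> m /ncmul_neq0 [i [nz_f nz_g]]; apply/List.in_flat_map.
exists (take i m); split; first exact: supp_f.
by apply/List.in_map_iff; exists (drop i m); rewrite cat_take_drop; split=> //; apply: supp_g.
Qed.

Lemma sum_drop_zero_terms (T : Type) (L : seq T) (F : T -> ncpoly R X) :
  exists L', (forall x, List.In x L' -> List.In x L /\ nonzero (F x)) /\
    forall m, \sum_(x <- L) F x m = \sum_(x <- L') F x m.
Proof.
elim: L => [|x L [L' [sub_L' sum_L']]]; first by exists [::].
case: (classic (nonzero (F x))) => [nz_x | z_x].
  exists (x :: L'); split=> [y /= [<- | Ly] | m]; last by rewrite !big_cons sum_L'.
    by split=> //; left.
  by have [] := sub_L' y Ly; split=> //; right.
exists L'; split=> [y Ly | m]; first by have [] := sub_L' y Ly; split=> //; right.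
rewrite big_cons sum_L'; case: (eqVneq (F x m) 0) => [-> | nz]; first by rewrite add0r.
by case: z_x; exists m.
Qed.

Lemma sum_expand (T : Type) (F : T -> ncpoly R X) (P : T -> Prop) (L : seq T) :
  (forall x, List.In x L -> exists Lx, (forall y, List.In y Lx -> P y) /\
     forall m, F x m = \sum_(y <- Lx) F y m) ->
  exists L', (forall y, List.In y L' -> P y) /\
    forall m, \sum_(x <- L) F x m = \sum_(y <- L') F y m.
Proof.
elim: L => [|x L IH] expand; first by exists [::].
have [Lx [P_Lx sum_Lx]] := expand x (or_introl erefl).
have [L' [P_L' sum_L']] := IH (fun y Ly => expand y (or_intror Ly)).
exists (Lx ++ L'); split=> [y Ly | m].
  by case: (List.in_app_or _ _ _ Ly); [apply: P_Lx | apply: P_L'].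
by rewrite big_cons big_cat sum_Lx sum_L'.
Qed.

Variable Q : quiver X.

Lemma reach_cat (u v : seq X) (s t : qV Q) :
  reach Q (u ++ v) s t <-> exists k, reach Q v s k /\ reach Q u k t.
Proof.
elim: u t => [|x u IH] t /=; first by split=> [|[k [? <-]]]; [exists t|].
split=> [[e [le [te /IH [k [? ?]]]]] | [k [? [e [le [te ?]]]]]].
  by exists k; split=> //; exists e.
by exists e; do 2 split=> //; apply/IH; exists k.
Qed.

Definition uniform f : Prop := forall m m', f m != 0 -> f m' != 0 ->
  forall p, sigma_m Q m p <-> sigma_m Q m' p.

Lemma in_RXQ_uniform f : in_RXQ Q f -> uniform f.
Proof. by case=> _ []. Qed.

Lemma uniform_mul f g : uniform f -> uniform g -> uniform (f ** g).
Proof.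
move=> Uf Ug m m' /ncmul_neq0 [i [f_i g_i]] /ncmul_neq0 [i' [f_i' g_i']] [s t].
rewrite /sigma_m /= -(cat_take_drop i m) -(cat_take_drop i' m') !reach_cat.
split=> [] [k [reach_g reach_f]]; exists k; split.
- exact/(Ug _ _ g_i g_i' (s, k)).
- exact/(Uf _ _ f_i f_i' (k, t)).
- exact/(Ug _ _ g_i' g_i (s, k)).
- exact/(Uf _ _ f_i' f_i (k, t)).
Qed.

Lemma sigma_mul f g s k t :
  sigma Q g (s, k) -> sigma Q f (k, t) -> sigma Q (f ** g) (s, t).
Proof.
move=> sg sf m /ncmul_neq0 [i [f_i g_i]].
rewrite /sigma_m /= -(cat_take_drop i m) reach_cat.
by exists k; split; [apply: sg | apply: sf].
Qed.

Lemma sigma_mul_inv f g s t : uniform f -> uniform g -> nonzero (f ** g) ->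
  sigma Q (f ** g) (s, t) -> exists k, sigma Q g (s, k) /\ sigma Q f (k, t).
Proof.
move=> Uf Ug [m nz_m] sfg; have := sfg m nz_m.
case/ncmul_neq0: nz_m => i [f_i g_i].
rewrite /sigma_m /= -(cat_take_drop i m) reach_cat => -[k [reach_g reach_f]].
exists k; split=> m' nz_m'; [exact/(Ug _ _ g_i nz_m' (s, k)) | exact/(Uf _ _ f_i nz_m' (k, t))].
Qed.

Lemma sigma_mul3_inv a g b s t : uniform a -> uniform g -> uniform b ->
  nonzero (a ** g ** b) -> sigma Q (a ** g ** b) (s, t) ->
  exists k k', [/\ sigma Q b (s, k), sigma Q g (k, k') & sigma Q a (k', t)].
Proof.
move=> Ua Ug Ub nz sagb.
have [k [sb sag]] := sigma_mul_inv (uniform_mul Ua Ug) Ub nz sagb.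
have [k' [sg sa]] := sigma_mul_inv Ua Ug (nonzero_mull nz) sag.
by exists k, k'.
Qed.

Lemma sigma_substitute a g b c f d s t :
  uniform a -> uniform g -> uniform b -> uniform c -> uniform f -> uniform d ->
  nonzero (a ** g ** b) -> nonzero (c ** f ** d) ->
  (forall p, sigma Q g p -> sigma Q (c ** f ** d) p) -> sigma Q (a ** g ** b) (s, t) ->
  exists k k', [/\ sigma Q (d ** b) (s, k), sigma Q (a ** c) (k', t) &
                  sigma Q (a ** c ** f ** (d ** b)) (s, t)].
Proof.
move=> Ua Ug Ub Uc Uf Ud nz_agb nz_cfd g_cfd sagb.
have [k1 [k2 [sb sg sa]]] := sigma_mul3_inv Ua Ug Ub nz_agb sagb.
have [k3 [k4 [sd sf sc]]] := sigma_mul3_inv Uc Uf Ud nz_cfd (g_cfd _ sg).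
have sdb := sigma_mul sb sd; have sac := sigma_mul sc sa.
by exists k3, k4; split=> //; apply: sigma_mul sdb (sigma_mul sf sac).
Qed.

Definition ncmul_triple (tr : ncpoly R X * ncpoly R X * ncpoly R X) : ncpoly R X :=
  tr.1.1 ** tr.1.2 ** tr.2.

Definition Qsummand (F : ncpoly R X -> Prop) h tr : Prop :=
  in_RXQ Q tr.1.1 /\ F tr.1.2 /\ in_RXQ Q tr.2 /\
  forall p, sigma Q h p -> sigma Q (ncmul_triple tr) p.

Lemma Qsummand_expand (F : ncpoly R X -> Prop) h a g b :
  (forall f, F f -> in_RXQ Q f) -> compatible Q h ->
  in_RXQ Q a -> uniform g -> in_RXQ Q b -> nonzero (a ** g ** b) ->
  (forall p, sigma Q h p -> sigma Q (a ** g ** b) p) -> Qconsequence Q F g ->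
  exists L, (forall tr, List.In tr L -> Qsummand F h tr) /\
    forall m, (a ** g ** b) m = \sum_(tr <- L) ncmul_triple tr m.
Proof.
move=> in_F [[s0 t0] h_s0t0] in_a Ug in_b nz_agb h_agb [_ [_ [Lg [Lg_F g_Lg]]]].
have [Lg' [Lg'_nz g_Lg']] := sum_drop_zero_terms Lg ncmul_triple.
exists (map (fun tr => (a ** tr.1.1, tr.1.2, tr.2 ** b)) Lg'); split.
  move=> _ /List.in_map_iff [[[c f] d] [<- /Lg'_nz [/Lg_F [in_c [F_f [in_d g_cfd]]] nz_cfd]]].
  have [Ua Ub] := (in_RXQ_uniform in_a, in_RXQ_uniform in_b).
  have [Uc Ud] := (in_RXQ_uniform in_c, in_RXQ_uniform in_d).
  have h_new s t (h_st : sigma Q h (s, t)) := sigma_substitute Ua Ug Ub Uc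
    (in_RXQ_uniform (in_F f F_f)) Ud nz_agb nz_cfd g_cfd (h_agb (s, t) h_st).
  have [k [k' [s_db s_ac _]]] := h_new s0 t0 h_s0t0.
  split; last (split=> //; split) => /=.
  - by split; [apply: is_poly_mul in_a.1 in_c.1 | split; [exists (k', t0) | apply: uniform_mul]].
  - by split; [apply: is_poly_mul in_d.1 in_b.1 | split; [exists (s0, k) | apply: uniform_mul]].
  - by move=> [s t] /h_new [? [? []]].
move=> m; rewrite big_map.
under [RHS]eq_bigr do rewrite /ncmul_triple /= ncmul_regroup.
rewrite -ncmul_suml; apply: ncmul_ext => // w.
rewrite -ncmul_sumr; apply: ncmul_ext => // w'.
by rewrite g_Lg g_Lg'.
Qed.

End FreeAlgebra.

Theorem corollary4p4 (R : comPzRingType) (X : Type) (Q : quiver X)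
  (F G : ncpoly R X -> Prop) :
  (forall f, F f -> in_RXQ Q f) ->
  (forall g, G g -> in_RXQ Q g) ->
  (forall g, G g -> Qconsequence Q F g) ->
  forall h, Qconsequence Q G h -> Qconsequence Q F h.
Proof.
move=> in_F in_G G_F h [poly_h [compat_h [L [L_G h_L]]]].
have [L' [L'_nz sum_L']] := sum_drop_zero_terms L (ncmul_triple (X := X)).
have [L'' [L''_F sum_L'']] : exists L'', (forall tr, List.In tr L'' -> Qsummand Q F h tr) /\
    forall m, \sum_(tr <- L') ncmul_triple tr m = \sum_(tr <- L'') ncmul_triple tr m.
  apply: sum_expand => -[[a g] b] /L'_nz [/L_G [in_a [G_g [in_b h_agb]]] nz_agb].
  exact: Qsummand_expand compat_h in_a (in_RXQ_uniform (in_G g G_g)) in_b nz_agb h_agb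
    (G_F g G_g).
split=> //; split=> //; exists L''; split=> // m.
by rewrite h_L sum_L' sum_L''.
Qed.
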